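(* Let $\mathcal{O}$ be an order in a number field $K$, and let $\mathfrak{m}_1,\mathfrak{m}_2$ be nonzero integral ideals of $\mathcal{O}$. Then: (1) $\{\mathfrak p \text{ prime}:\mathfrak{m}_1\subseteq\mathfrak{p}\}\subseteq\{\mathfrak p\text{ prime}:\mathfrak{m}_2\subseteq\mathfrak{p}\}$ if and only if $I_{\mathfrak{m}_2}(\mathcal{O})\subseteq I_{\mathfrak{m}_1}(\mathcal{O})$; (2) if $I_{\mathfrak{m}_2}(\mathcal{O})\subseteq I_{\mathfrak{m}_1}(\mathcal{O})$, then $J^*_{\mathfrak{m}_2}(\mathcal{O})\subseteq J^*_{\mathfrak{m}_1}(\mathcal{O})$; (3) for any nonzero $\mathcal{O}$-ideal $\mathfrak{m}$ there exists an invertible integral ideal $\widetilde{\mathfrak{m}}\in I^*(\mathcal{O})$ with $\widetilde{\mathfrak{m}}\subseteq\mathfrak{m}$ and $I_{\mathfrak{m}}(\mathcal{O})=I_{\widetilde{\mathfrak{m}}}(\mathcal{O})$ (and hence $J^*_{\mathfrak{m}}(\mathcal{O})=J^*_{\widetilde{\mathfrak{m}}}(\mathcal{O})$).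
   Context: An order is a subring of $K$ containing $1$ that is free of rank $[K:\mathbb Q]$ over $\mathbb Z$. In (1), $\mathfrak p$ ranges over prime ideals of $\mathcal O$. $I_{\mathfrak m}(\mathcal O)$ is the set of integral $\mathcal O$-ideals $\mathfrak a$ with $\mathfrak a+\mathfrak m=\mathcal O$; $I^*(\mathcal O)$ is the set of invertible integral ideals (integral $\mathfrak a$ with $\mathfrak a\mathfrak b=\gamma\mathcal O$ for some integral $\mathfrak b$ and nonzero $\gamma$). $J^*_{\mathfrak m}(\mathcal O)$ is the group of invertible fractional $\mathcal O$-ideals coprime to $\mathfrak m$, i.e. of the form $\mathfrak a\mathfrak b^{-1}$ with $\mathfrak a,\mathfrak b$ invertible integral ideals coprime to $\mathfrak m$ (fractional ideal: $\mathcal O$-submodule $\mathfrak a\subseteq K$ with $\lambda\mathfrak a\subseteq\mathcal O$ for some $\lambda\in K^\times$; invertible: $\mathfrak a\mathfrak b=\mathcal O$ for a fractional $\mathfrak b$). *)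

From HB Require Import structures.
From mathcomp Require Import all_boot all_order all_algebra all_field.
Set Implicit Arguments. Unset Strict Implicit. Unset Printing Implicit Defensive.
Import Order.TTheory GRing.Theory Num.Theory.
Local Open Scope ring_scope.

Section OrderDefs.
Variable K : fieldExtType rat.

Definition seteq (A B : K -> Prop) := forall x, A x <-> B x.
Definition subsetK (A B : K -> Prop) := forall x, A x -> B x.

Definition is_order (O : K -> Prop) :=
  [/\ O 1,
      (forall x y, O x -> O y -> O (x - y)),
      (forall x y, O x -> O y -> O (x * y)) &
      exists b : 'I_(\dim {:K}) -> K,
        (forall x, O x <-> exists z : 'I_(\dim {:K}) -> int, x = \sum_i b i *~ z i) /\
        (forall z : 'I_(\dim {:K}) -> int, \sum_i b i *~ z i = 0 -> forall i, z i = 0)].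

Definition is_Omodule (O A : K -> Prop) :=
  [/\ A 0, (forall x y, A x -> A y -> A (x + y)) &
      (forall r x, O r -> A x -> A (r * x))].

Definition is_ideal (O I : K -> Prop) := is_Omodule O I /\ subsetK I O.

Definition nonzero_set (I : K -> Prop) := exists x, I x /\ x != 0.

Definition is_prime_ideal (O P : K -> Prop) :=
  [/\ is_ideal O P, ~ P 1 &
      forall a b, O a -> O b -> P (a * b) -> P a \/ P b].

Definition is_frac_ideal (O A : K -> Prop) :=
  is_Omodule O A /\ exists l : K, l != 0 /\ forall x, A x -> O (l * x).

Definition idmul (A B : K -> Prop) : K -> Prop := fun x =>
  exists s : seq (K * K), (forall p, p \in s -> A p.1 /\ B p.2) /\
                          x = \sum_(p <- s) p.1 * p.2.

Definition idadd (A B : K -> Prop) : K -> Prop := fun x =>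
  exists y z, A y /\ B z /\ x = y + z.

Definition idinv (O B : K -> Prop) : K -> Prop := fun x =>
  forall y, B y -> O (x * y).

Definition principal (O : K -> Prop) (g : K) : K -> Prop := fun x =>
  exists r, O r /\ x = g * r.

Definition inv_integral (O A : K -> Prop) :=
  is_ideal O A /\ exists (B : K -> Prop) (g : K),
    is_ideal O B /\ g != 0 /\ seteq (idmul A B) (principal O g).

Definition coprime_to (O A M : K -> Prop) := seteq (idadd A M) O.

Definition I_m (O M A : K -> Prop) := is_ideal O A /\ coprime_to O A M.

Definition J_m (O M A : K -> Prop) :=
  exists A0 B0 : K -> Prop,
    [/\ inv_integral O A0, inv_integral O B0, coprime_to O A0 M,
        coprime_to O B0 M & seteq A (idmul A0 (idinv O B0))].

End OrderDefs.

From HB Require Import structures.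
From mathcomp Require Import all_boot all_order all_algebra all_field.
From mathcomp Require Import ring zify boolp.
Import Order.TTheory GRing.Theory Num.Theory.
Local Open Scope ring_scope.
Set Implicit Arguments. Unset Strict Implicit. Unset Printing Implicit Defensive.

(* A nonzero ideal m of O contains a positive integer N, and O/NO is finite
   because O is a lattice. Finiteness yields (a) every proper ideal containing
   N lies in a prime, namely in a maximal proper ideal, and (b) every x in O
   has a power x^t that is idempotent modulo N. By (a), I_m2 is contained in
   I_m1 as soon as every prime above m1 lies above m2; conversely, if a prime
   P above m1 misses x in m2, then e = x^t is idempotent mod N, so 1 - e lies
   in P and P + m2 = O, which forces P + m1 = O. For (3), among the ideals
   NO + fO with f in m idempotent mod N a maximal one contains every such
   idempotent, hence a power of every element of m, so it lies in the same
   primes as m; it is invertible since (NO + fO)(NO + (1-f)O) = NO. *)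

Lemma common_denominator (I : finType) (q : I -> rat) :
  exists2 D : nat, (0 < D)%N & exists z : I -> int, forall i, (z i)%:~R = D%:R * q i.
Proof.
exists (\prod_i `|denq (q i)|)%N; first by rewrite prodn_gt0 // => i; rewrite absz_gt0.
exists (fun i => numq (q i) * (\prod_(j | j != i) `|denq (q j)|)%N%:Z) => i.
rewrite [in RHS](bigD1 i) //= natrM rmorphM /= numqE natr_absz gtr0_norm //.
rewrite -[X in _ = _ * X * _]pmulrn; ring.
Qed.

Section Order.
Variables (K : fieldExtType rat) (O : K -> Prop).
Hypotheses (O1 : O 1) (OB : forall x y, O x -> O y -> O (x - y))
           (OM : forall x y, O x -> O y -> O (x * y)).

Lemma O0 : O 0. Proof. by rewrite -(subrr 1); apply: OB. Qed.

Lemma ON x : O x -> O (- x).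
Proof. by move=> Ox; rewrite -sub0r; apply: OB => //; apply: O0. Qed.

Lemma OD x y : O x -> O y -> O (x + y).
Proof. by move=> Ox Oy; rewrite -[y]opprK; apply: OB => //; apply: ON. Qed.

Lemma OX x k : O x -> O (x ^+ k).
Proof. by move=> Ox; elim: k => [|k IHk]; rewrite ?expr0 // exprS; apply: OM. Qed.

Lemma Onat k : O k%:R.
Proof. by elim: k => [|k IHk]; [apply: O0 | rewrite mulrSr; apply: OD]. Qed.

Lemma order_ideal : is_ideal O O.
Proof. by split=> //; split=> [|x y|r x]; [apply: O0 | apply: OD | apply: OM]. Qed.

Section Ideal.
Variable I : K -> Prop.
Hypothesis idI : is_ideal O I.

Lemma ideal0 : I 0. Proof. by case: idI => -[]. Qed.
Lemma idealD x y : I x -> I y -> I (x + y). Proof. by case: idI => -[_ + _] _; apply. Qed.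
Lemma idealM r x : O r -> I x -> I (r * x). Proof. by case: idI => -[_ _ +] _; apply. Qed.
Lemma idealMr r x : O r -> I x -> I (x * r). Proof. by rewrite mulrC; apply: idealM. Qed.
Lemma idealO x : I x -> O x. Proof. by case: idI => _; apply. Qed.

Lemma idealB x y : I x -> I y -> I (x - y).
Proof.
by move=> Ix Iy; rewrite -mulN1r; apply: idealD => //; apply: idealM => //; apply: ON.
Qed.

Lemma idealX x k : I x -> I (x ^+ k.+1).
Proof. by move=> Ix; rewrite exprS; apply: idealMr => //; apply/OX/idealO. Qed.

End Ideal.

Lemma principal_ideal g : O g -> is_ideal O (principal O g).
Proof.
move=> Og; split=> [|x [r [Or ->]]]; last exact: OM.
split=> [|x y [r [Or ->]] [s [Os ->]]|r x Or [s [Os ->]]].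
- by exists 0; rewrite mulr0; split=> //; apply: O0.
- by exists (r + s); rewrite mulrDr; split=> //; apply: OD.
- by exists (r * s); rewrite mulrCA; split=> //; apply: OM.
Qed.

Lemma principalM g r : O r -> principal O g (g * r). Proof. by exists r. Qed.

Lemma principal_self g : principal O g g. Proof. by exists 1; rewrite mulr1. Qed.

Lemma principal_sub J g : is_ideal O J -> J g -> subsetK (principal O g) J.
Proof. by move=> idJ Jg _ [r [Or ->]]; apply: idealMr. Qed.

Lemma idadd_ideal A B : is_ideal O A -> is_ideal O B -> is_ideal O (idadd A B).
Proof.
move=> idA idB; split=> [|_ [y [z [Ay [Bz ->]]]]]; last first.
  by apply: OD; [apply: idealO Ay | apply: idealO Bz].
split=> [|_ _ [y [z [Ay [Bz ->]]]] [y' [z' [Ay' [Bz' ->]]]]|r _ Or [y [z [Ay [Bz ->]]]]].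
- by exists 0, 0; rewrite addr0; do !split; apply: ideal0.
- by exists (y + y'), (z + z'); rewrite addrACA; do !split; apply: idealD.
- by exists (r * y), (r * z); rewrite mulrDr; do !split; apply: idealM.
Qed.

Lemma idaddl A B x : is_ideal O B -> A x -> idadd A B x.
Proof. by move=> idB Ax; exists x, 0; rewrite addr0; split; [|split; [apply: ideal0|]]. Qed.

Lemma idaddr A B x : is_ideal O A -> B x -> idadd A B x.
Proof. by move=> idA Bx; exists 0, x; rewrite add0r; split; [apply: ideal0|]. Qed.

Lemma idadd_sub A B J : is_ideal O J -> subsetK A J -> subsetK B J -> subsetK (idadd A B) J.
Proof. by move=> idJ AJ BJ _ [y [z [Ay [Bz ->]]]]; exact: idealD (AJ _ Ay) (BJ _ Bz). Qed.

Lemma coprime_toP A B :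
  is_ideal O A -> is_ideal O B -> coprime_to O A B <-> idadd A B 1.
Proof.
move=> idA idB; split=> [cop | AB1 x]; first exact/cop.
split; first by apply: idadd_sub; [apply: order_ideal | apply: idealO ..].
by move=> Ox; rewrite -[x]mulr1; apply: idealM => //; apply: idadd_ideal.
Qed.

Lemma idmul_sub A B J : is_ideal O J ->
  (forall a b, A a -> B b -> J (a * b)) -> subsetK (idmul A B) J.
Proof.
move=> idJ AB_J _ [s [sAB ->]]; elim: s sAB => [|p s IHs] sAB.
  by rewrite big_nil; apply: ideal0 idJ.
rewrite big_cons; apply: (idealD idJ).
  by have [Ap Bp] := sAB p (mem_head _ _); exact: AB_J.
by apply: IHs => p' s_p'; apply: sAB; rewrite inE s_p' orbT.
Qed.

Lemma idmul_sum2 (A B : K -> Prop) (a1 b1 a2 b2 : K) :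
  A a1 -> B b1 -> A a2 -> B b2 -> idmul A B (a1 * b1 + a2 * b2).
Proof.
move=> Aa1 Bb1 Aa2 Bb2; exists [:: (a1, b1); (a2, b2)].
by rewrite !big_cons big_nil addr0; split=> // p; rewrite !inE => /orP[] /eqP ->.
Qed.

Lemma prime_idealX P x k : is_prime_ideal O P -> O x -> P (x ^+ k) -> P x.
Proof.
case=> _ nP1 prP Ox; elim: k => [|k IHk]; first by rewrite expr0.
by rewrite exprS => /prP[] //; apply: OX.
Qed.

Lemma maximal_prime_ideal J : is_ideal O J -> ~ J 1 ->
  (forall J', is_ideal O J' -> ~ J' 1 -> subsetK J J' -> subsetK J' J) ->
  is_prime_ideal O J.
Proof.
move=> idJ nJ1 maxJ; split=> // a c Oa Oc Jac; apply: contrapT => /not_orP[nJa nJc].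
have J_a1 x : O x -> ~ J x -> idadd J (principal O x) 1.
  move=> Ox nJx; apply: contrapT => nJx1; apply/nJx.
  apply: (maxJ _ (idadd_ideal idJ (principal_ideal Ox)) nJx1).
    by move=> y; apply: idaddl; apply: principal_ideal.
  by apply: idaddr => //; apply: principal_self.
have [y1 [_ [Jy1 [[r1 [Or1 ->]] e1]]]] := J_a1 a Oa nJa.
have [y2 [_ [Jy2 [[r2 [Or2 ->]] e2]]]] := J_a1 c Oc nJc.
have Oy1 := idealO idJ Jy1.
apply: nJ1; rewrite -[1]mulr1 {1}e1 e2.
have -> : (y1 + a * r1) * (y2 + c * r2) =
          (y1 + a * r1) * y2 + y1 * (c * r2) + a * c * (r1 * r2) by ring.
apply: (idealD idJ); first apply: (idealD idJ).
- by apply: (idealM idJ) => //; apply: OD => //; apply: OM.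
- by apply: (idealMr idJ) => //; apply: OM.
- by apply: (idealMr idJ) => //; apply: OM.
Qed.

Lemma J_m_subset M1 M2 : (forall A, I_m O M2 A -> I_m O M1 A) ->
  forall A, J_m O M2 A -> J_m O M1 A.
Proof.
move=> I_sub A [A0 [B0 [invA0 invB0 copA0 copB0 defA]]]; exists A0, B0.
have [_ copA0'] := I_sub A0 (conj invA0.1 copA0).
have [_ copB0'] := I_sub B0 (conj invB0.1 copB0).
by split.
Qed.

Definition congmod (N x y : K) := principal O N (x - y).

Definition idem_mod (N e : K) := congmod N (e * e) e.

Lemma congmod_refl N x : congmod N x x.
Proof. by exists 0; rewrite subrr mulr0; split=> //; apply: O0. Qed.

Lemma congmod_sym N x y : congmod N x y -> congmod N y x.
Proof.
by case=> w [Ow exy]; exists (- w); rewrite mulrN -exy opprB; split=> //; apply: ON.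
Qed.

Lemma congmod_trans N x y z : congmod N x y -> congmod N y z -> congmod N x z.
Proof.
case=> [w [Ow exy]] [w' [Ow' eyz]]; exists (w + w').
by rewrite mulrDr -exy -eyz addrA subrK; split=> //; apply: OD.
Qed.

Lemma congmodMl N x y z : O z -> congmod N x y -> congmod N (z * x) (z * y).
Proof.
move=> Oz [w [Ow exy]]; exists (z * w).
by rewrite -mulrBr exy mulrCA; split=> //; apply: OM.
Qed.

Lemma idem_mod_join N f e : O f -> O e -> idem_mod N f -> idem_mod N e ->
  idem_mod N (f + e - f * e).
Proof.
move=> Of Oe [w [Ow ef]] [w' [Ow' ee]]; exists (w * (1 - e) ^+ 2 + (1 - f) * w').
split; first by apply: OD; apply: OM => //; [apply: OX |]; apply: OB.
have -> : (f + e - f * e) * (f + e - f * e) - (f + e - f * e) =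
  (f * f - f) * (1 - e) ^+ 2 + (1 - f) * (e * e - e) by ring.
by rewrite ef ee; ring.
Qed.

Definition mtilde (N f : K) := idadd (principal O N) (principal O f).

Lemma mtilde_ideal N f : O N -> O f -> is_ideal O (mtilde N f).
Proof. by move=> O_N Of; apply: idadd_ideal; apply: principal_ideal. Qed.

Lemma mtildeN N f : O f -> mtilde N f N.
Proof. by move=> Of; apply: idaddl; [apply: principal_ideal | apply: principal_self]. Qed.

Lemma mtilde_gen N f : O N -> mtilde N f f.
Proof. by move=> O_N; apply: idaddr; [apply: principal_ideal | apply: principal_self]. Qed.

Lemma mtilde_sub N f J : is_ideal O J -> J N -> J f -> subsetK (mtilde N f) J.
Proof. by move=> idJ JN Jf; apply: idadd_sub => //; apply: principal_sub. Qed.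

(* f = (f + e - f e) f - (f^2 - f) (1 - e) *)
Lemma mtilde_join N f e : O f -> O e -> idem_mod N f -> mtilde N (f + e - f * e) f.
Proof.
move=> Of Oe [w [Ow ef]]; exists (N * - (w * (1 - e))), ((f + e - f * e) * f).
split; first by apply/principalM/ON/OM/OB.
by split; [apply: principalM | rewrite mulrN mulrA -ef; ring].
Qed.

Lemma mtilde_invertible N f :
  O N -> N != 0 -> O f -> idem_mod N f -> inv_integral O (mtilde N f).
Proof.
move=> O_N N0 Of [w [Ow ef]]; have O1f : O (1 - f) by apply: OB.
split; first exact: mtilde_ideal.
exists (mtilde N (1 - f)), N; split; first exact: mtilde_ideal.
split=> // x; split.
  apply: idmul_sub; first exact: principal_ideal.
  move=> a c [_ [_ [[r1 [Or1 ->]] [[r2 [Or2 ->]] ->]]]].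
  move=> [_ [_ [[r3 [Or3 ->]] [[r4 [Or4 ->]] ->]]]].
  exists (r1 * N * r3 + r1 * (1 - f) * r4 + f * r2 * r3 - w * (r2 * r4)).
  split; first by repeat first [assumption | apply: OB | apply: OD | apply: OM].
  have -> : (N * r1 + f * r2) * (N * r3 + (1 - f) * r4) =
    N * (r1 * N * r3 + r1 * (1 - f) * r4 + f * r2 * r3) - (f * f - f) * (r2 * r4) by ring.
  by rewrite ef; ring.
case=> r [Or ->]; have -> : N * r = f * (N * r) + (N * r) * (1 - f) by ring.
have mtildeNr g : O g -> mtilde N g (N * r).
  by move=> Og; apply: idaddl; [apply: principal_ideal | apply: principalM].
by apply: idmul_sum2; apply: mtilde_gen || apply: mtildeNr.
Qed.

Section Lattice.
Variable b : 'I_(\dim {:K}) -> K.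
Hypotheses
  (Ospan : forall x, O x <-> exists z : 'I_(\dim {:K}) -> int, x = \sum_i b i *~ z i)
  (Oind : forall z : 'I_(\dim {:K}) -> int, \sum_i b i *~ z i = 0 -> forall i, z i = 0).

Let X := [tuple b i | i < \dim {:K}].

Let Xi (i : 'I_(\dim {:K})) : X`_i = b i. Proof. exact: nth_mktuple. Qed.

Lemma lattice_basis_free : free X.
Proof.
apply/freeP => k k0 i.
have [D D_gt0 [z Dz]] := common_denominator k.
have : \sum_j b j *~ z j = 0.
  transitivity (D%:R *: \sum_j k j *: X`_j); last by rewrite k0 scaler0.
  by rewrite scaler_sumr; apply: eq_bigr => j _; rewrite -scaler_int Dz scalerA Xi.
move/Oind/(_ i)/eqP; rewrite -(intr_eq0 rat) Dz mulf_eq0 pnatr_eq0.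
by rewrite eqn0Ngt D_gt0 => /eqP.
Qed.

Lemma coord_lattice z i : coord X i (\sum_j b j *~ z j) = (z i)%:~R.
Proof.
rewrite -(coord_sum_free (fun j => (z j)%:~R) i lattice_basis_free).
by congr coord; apply: eq_bigr => j _; rewrite Xi scaler_int.
Qed.

Lemma denominator_exists y : exists2 k : nat, (0 < k)%N & O (k%:R * y).
Proof.
have Xbasis : basis_of fullv X.
  by rewrite basisEfree lattice_basis_free subvf size_tuple leqnn.
have [D D_gt0 [z Dz]] := common_denominator (fun i => coord X i y).
exists D => //; apply/Ospan; exists z.
rewrite {1}(coord_basis Xbasis (memvf y)) mulr_natl -scaler_nat scaler_sumr.
by apply: eq_bigr => j _; rewrite -scaler_int Dz scalerA Xi.
Qed.

Lemma ideal_has_nat M : is_ideal O M -> nonzero_set M -> exists n, M n.+1%:R.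
Proof.
move=> idM [m [Mm m0]]; have [k k_gt0 Okm] := denominator_exists m^-1.
by exists k.-1; rewrite prednK // -(mulfVK m0 k%:R); apply: idealM.
Qed.

Section Modulus.
Variable n : nat.
Let N : K := n.+1%:R.
Let T := {ffun 'I_(\dim {:K}) -> 'I_n.+1}.

Let O_N : O N. Proof. exact: Onat. Qed.

Definition residue (x : K) : T :=
  [ffun i => inord `|(numq (coord X i x) %% n.+1)%Z|%N].

Lemma residue_congmod x y : O x -> O y -> residue x = residue y -> congmod N x y.
Proof.
move=> /Ospan[z ->] /Ospan[z' ->] /ffunP eq_res.
have modz_lt (m : int) : (`|(m %% n.+1)%Z|%N < n.+1)%N.
  by rewrite -ltz_nat gez0_abs ?modz_ge0 // ltz_pmod.
have dvd_zz' i : (n.+1 %| z i - z' i)%Z.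
  have := eq_res i; rewrite !ffunE !coord_lattice !numq_int.
  move/(congr1 val); rewrite /= !inordK // => /(congr1 Posz).
  by rewrite !gez0_abs ?modz_ge0 // => /eqP; rewrite eqz_mod_dvd.
exists (\sum_i b i *~ ((z i - z' i) %/ n.+1)%Z); split; first by apply/Ospan; eexists.
rewrite -sumrB mulr_sumr; apply: eq_bigr => i _.
by rewrite -mulrzBr -{1}(divzK (dvd_zz' i)) mulrzA -mulrzr mulrC.
Qed.

Definition residues (J : K -> Prop) : {set T} :=
  [set c | `[< exists2 x, J x & residue x = c >]].

Lemma residues_proper J J' x : is_ideal O J -> J N -> is_ideal O J' ->
  subsetK J J' -> J' x -> ~ J x -> residues J \proper residues J'.
Proof.
move=> idJ JN idJ' JJ' J'x nJx; apply/properP; split.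
  apply/subsetP => c; rewrite !inE => /asboolP[y Jy <-].
  by apply/asboolP; exists y => //; apply: JJ'.
exists (residue x); rewrite inE; first by apply/asboolP; exists x.
apply/asboolP => -[y Jy eq_res]; apply: nJx.
have [w [Ow exy]] := residue_congmod (idealO idJ' J'x) (idealO idJ Jy) (esym eq_res).
by rewrite -(subrK y x) exy; apply: (idealD idJ) => //; apply: (idealMr idJ).
Qed.

(* Ascending chain condition: ideals containing N are told apart by their
   sets of residues, which are subsets of the finite type T. *)
Lemma maximal_ideal_exists (Q : (K -> Prop) -> Prop) J0 :
  is_ideal O J0 -> J0 N -> Q J0 ->
  exists J, [/\ is_ideal O J, subsetK J0 J, Q J &
    forall J', is_ideal O J' -> Q J' -> subsetK J J' -> subsetK J' J].
Proof.
have [k] := ubnP (#|T| - #|residues J0|).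
elim: k J0 => // k IHk J0 lt_k idJ0 J0N QJ0.
have [[J' [idJ' QJ' J0J' [x J'x nJ0x]]] | maxJ0] := pselect
  (exists J', [/\ is_ideal O J', Q J', subsetK J0 J' & exists2 x, J' x & ~ J0 x]).
  have lt_res := proper_card (residues_proper idJ0 J0N idJ' J0J' J'x nJ0x).
  have le_res := max_card (residues J').
  have lt_k' : (#|T| - #|residues J'| < k)%N.
    exact: leq_trans (ltn_sub2l (leq_trans lt_res le_res) lt_res) lt_k.
  have [J [idJ J'J QJ maxJ]] := IHk J' lt_k' idJ' (J0J' _ J0N) QJ'.
  by exists J; split=> // y /J0J' /J'J.
exists J0; split=> // J' idJ' QJ' J0J' x J'x; apply: contrapT => nJ0x.
by apply: maxJ0; exists J'; split=> //; exists x.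
Qed.

Lemma prime_ideal_above J : is_ideal O J -> J N -> ~ J 1 ->
  exists2 P, is_prime_ideal O P & subsetK J P.
Proof.
move=> idJ JN nJ1.
have [P [idP JP nP1 maxP]] := maximal_ideal_exists (Q := fun J' => ~ J' 1) idJ JN nJ1.
by exists P => //; apply: maximal_prime_ideal.
Qed.

Lemma power_residues_collide x :
  exists i j, (i < j)%N /\ residue (x ^+ i) = residue (x ^+ j).
Proof.
pose f (i : 'I_#|T|.+1) := residue (x ^+ i).
have /injectivePn[i [j neq_ij eq_f]] : ~~ injectiveb f.
  by apply/injectiveP => /leq_card; rewrite card_ord ltnn.
case: (ltngtP i j) => [lt_ij | lt_ji | /val_inj eq_ij]; first by exists i, j.
  by exists j, i.
by rewrite eq_ij eqxx in neq_ij.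
Qed.

Lemma idem_mod_power x : O x -> exists2 t, (0 < t)%N & idem_mod N (x ^+ t).
Proof.
move=> Ox; have [i [j [lt_ij eq_res]]] := power_residues_collide x.
have cong_ij := residue_congmod (OX i Ox) (OX j Ox) eq_res.
set p := (j - i)%N.
have shift k : (i <= k)%N -> congmod N (x ^+ k) (x ^+ (k + p)).
  move=> le_ik; have -> : (k + p = k - i + j)%N by rewrite /p; lia.
  by rewrite exprD -{1}(subnK le_ik) exprD; apply: congmodMl => //; apply: OX.
have periodic a k : (i <= k)%N -> congmod N (x ^+ k) (x ^+ (k + a * p)).
  move=> le_ik; elim: a => [|a IHa]; first by rewrite mul0n addn0; apply: congmod_refl.
  by apply: congmod_trans IHa _; rewrite mulSnr addnA; apply: shift; lia.
exists (j * p)%N; first by rewrite /p; nia.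
by rewrite /idem_mod -exprD; apply/congmod_sym/periodic; rewrite /p; nia.
Qed.

Lemma idem_mod_generator M : is_ideal O M -> M N ->
  exists f, [/\ M f, idem_mod N f & forall e, M e -> idem_mod N e -> mtilde N f e].
Proof.
move=> idM MN.
pose Q J := exists f, [/\ M f, idem_mod N f & J = mtilde N f].
have Q0 : Q (mtilde N 0).
  exists 0; split=> //; first exact: ideal0.
  by rewrite /idem_mod mulr0; apply: congmod_refl.
have [_ [_ _ [f [Mf idem_f ->]] maxf]] :=
  maximal_ideal_exists (mtilde_ideal O_N O0) (mtildeN N O0) Q0.
exists f; split=> // e Me idem_e.
have [Of Oe] := (idealO idM Mf, idealO idM Me).
set g := f + e - f * e.
have Og : O g by apply: OB; [apply: OD | apply: OM].
have Qg : Q (mtilde N g).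
  exists g; split=> //; last exact: idem_mod_join.
  by apply: idealB => //; [apply: idealD | apply: idealMr].
apply: (maxf _ (mtilde_ideal O_N Og) Qg).
  by apply: mtilde_sub; [apply: mtilde_ideal | apply: mtildeN | apply: mtilde_join].
have -> : g = e + f - e * f by rewrite /g; ring.
exact: mtilde_join.
Qed.

Lemma I_m_subset_of_primes M1 M2 : is_ideal O M1 -> M1 N -> is_ideal O M2 ->
  (forall P, is_prime_ideal O P -> subsetK M1 P -> subsetK M2 P) ->
  forall A, I_m O M2 A -> I_m O M1 A.
Proof.
move=> idM1 M1N idM2 primes A [idA copA]; split=> //; apply/coprime_toP => //.
apply: contrapT => nAM1.
have [P primeP AM1P] :=
  prime_ideal_above (idadd_ideal idA idM1) (idaddr idA M1N) nAM1.
have [idP nP1 _] := primeP.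
have M1P : subsetK M1 P by move=> x M1x; apply/AM1P/idaddr.
have AP : subsetK A P by move=> x Ax; apply/AM1P/idaddl.
apply/nP1/(idadd_sub idP AP (primes P primeP M1P)).
exact/coprime_toP.
Qed.

Lemma primes_subset_of_I_m M1 M2 : is_ideal O M1 -> M1 N -> is_ideal O M2 ->
  (forall A, I_m O M2 A -> I_m O M1 A) ->
  forall P, is_prime_ideal O P -> subsetK M1 P -> subsetK M2 P.
Proof.
move=> idM1 M1N idM2 I_sub P primeP M1P x M2x; apply: contrapT => nPx.
have [idP nP1 prP] := primeP.
have Ox := idealO idM2 M2x.
have [t t_gt0 [w [Ow ew]]] := idem_mod_power Ox.
have Oe : O (x ^+ t) := OX t Ox.
have P1e : P (1 - x ^+ t).
  have : P (x ^+ t * (1 - x ^+ t)).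
    rewrite mulrBr mulr1 -opprB ew -mulrN.
    by apply: (idealMr idP); [apply: ON | apply: M1P].
  by case/prP => //; [apply: OB | move/(prime_idealX primeP Ox)].
have M2e : M2 (x ^+ t) by rewrite -(prednK t_gt0); apply: idealX.
have copP : coprime_to O P M2.
  by apply/coprime_toP => //; exists (1 - x ^+ t), (x ^+ t); rewrite subrK.
have [_ /(coprime_toP idP idM1) PM1_1] := I_sub P (conj idP copP).
by apply: nP1; apply: (idadd_sub idP _ M1P PM1_1).
Qed.

Lemma invertible_ideal_same_I_m M : is_ideal O M -> M N ->
  exists Mt, [/\ inv_integral O Mt, subsetK Mt M & forall A, I_m O M A <-> I_m O Mt A].
Proof.
move=> idM MN; have [f [Mf idem_f max_f]] := idem_mod_generator idM MN.
have Of := idealO idM Mf.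
have MtM : subsetK (mtilde N f) M by apply: mtilde_sub.
have N0 : N != 0 by rewrite /N -(rmorph_nat (in_alg K)) fmorph_eq0 pnatr_eq0.
have idMt := mtilde_ideal O_N Of.
exists (mtilde N f); split=> //; first exact: mtilde_invertible.
move=> A; split; last by apply: I_m_subset_of_primes => // P _ MP x /MtM /MP.
apply: I_m_subset_of_primes => //; first exact: mtildeN.
move=> P primeP MtP x Mx; have Ox := idealO idM Mx.
have [t t_gt0 idem_xt] := idem_mod_power Ox.
apply: (prime_idealX (k := t) primeP Ox); apply/MtP/max_f => //.
by rewrite -(prednK t_gt0); apply: idealX.
Qed.

End Modulus.

End Lattice.

End Order.

Theorem lemma5p9 (K : fieldExtType rat) (O : K -> Prop) (M1 M2 : K -> Prop) :
  is_order O ->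
  is_ideal O M1 -> nonzero_set M1 ->
  is_ideal O M2 -> nonzero_set M2 ->
  [/\ ((forall P, is_prime_ideal O P -> subsetK M1 P -> subsetK M2 P) <->
       (forall A, I_m O M2 A -> I_m O M1 A)),
      ((forall A, I_m O M2 A -> I_m O M1 A) ->
       (forall A, J_m O M2 A -> J_m O M1 A)) &
      (forall M : K -> Prop, is_ideal O M -> nonzero_set M ->
        exists Mt : K -> Prop,
          [/\ inv_integral O Mt, subsetK Mt M,
              (forall A, I_m O M A <-> I_m O Mt A) &
              (forall A, J_m O M A <-> J_m O Mt A)])].
Proof.
case=> O1 OB OM [b [Ospan Oind]] idM1 nzM1 idM2 _.
have [n M1N] := ideal_has_nat Ospan Oind idM1 nzM1.
split.
- split; first exact: (I_m_subset_of_primes O1 OB OM Ospan Oind idM1 M1N idM2).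
  exact: (primes_subset_of_I_m O1 OB OM Ospan Oind idM1 M1N idM2).
- exact: J_m_subset.
move=> M idM nzM; have [n' MN] := ideal_has_nat Ospan Oind idM nzM.
have [Mt [invMt MtM same_I_m]] :=
  invertible_ideal_same_I_m O1 OB OM Ospan Oind idM MN.
by exists Mt; split=> // A; split; apply: J_m_subset => B /same_I_m.
Qed.
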